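(* For every $n\ge 1$, $c_{n+1}\le (1-2^{-n})c_n+2^{-n}$.
   Context: For $n\ge1$, $c_n$ denotes the probability that $G\sim G(n,1/2)$ is not even-degenerate. A graph on $n$ vertices is even-degenerate if there is an ordering $v_1,\dots,v_n$ of its vertices such that for each $1\le i\le n-2$, $v_i$ has an even number of neighbours in $\{v_{i+1},\dots,v_n\}$. *)

From mathcomp Require Import all_boot all_order all_fingroup all_algebra.
Set Implicit Arguments. Unset Strict Implicit. Unset Printing Implicit Defensive.
Import Order.TTheory GRing.Theory Num.Theory.

(* A simple graph on the vertex set 'I_n is encoded by its edge set
   E : {set 'I_n * 'I_n} consisting only of pairs (u,v) with u < v;
   each unordered edge {u,v} (u < v) is represented once as (u,v). *)
Definition upper_pairs (n : nat) : {set 'I_n * 'I_n} :=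
  [set p : 'I_n * 'I_n | (p.1 < p.2)%N].

Definition is_graph (n : nat) (E : {set 'I_n * 'I_n}) : bool :=
  E \subset upper_pairs n.

Definition adj (n : nat) (E : {set 'I_n * 'I_n}) (u v : 'I_n) : bool :=
  ((u, v) \in E) || ((v, u) \in E).

(* Even-degenerate: there is an ordering v_0,...,v_{n-1} (given by a
   permutation s, v_i = s i) such that for each 0-indexed i < n-2
   (i.e. 1-indexed i <= n-2), v_i has an even number of neighbours
   among v_{i+1},...,v_{n-1}. *)
Definition even_degenerate (n : nat) (E : {set 'I_n * 'I_n}) : bool :=
  [exists s : 'S_n, forall i : 'I_n, (i < n - 2)%N ==>
     ~~ odd #|[set j : 'I_n | (i < j)%N && adj E (s i) (s j)]|].

(* c_n : probability that G ~ G(n,1/2) is not even-degenerate, i.e.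
   (#graphs on n labelled vertices that are not even-degenerate) / 2^(n choose 2),
   with all graphs on 'I_n equally likely. *)
Definition c (n : nat) : rat :=
  (#|[set E : {set 'I_n * 'I_n} | is_graph E && ~~ even_degenerate E]|%:R
   / #|[set E : {set 'I_n * 'I_n} | is_graph E]|%:R)%R.

From mathcomp Require Import all_boot all_order all_fingroup all_algebra.
From mathcomp Require Import zify ring.
Import Order.TTheory GRing.Theory Num.Theory.
Set Implicit Arguments. Unset Strict Implicit. Unset Printing Implicit Defensive.

(* Let G be a graph on n+1 vertices that is not even-degenerate and let v be
   the first of the vertices 0, ..., n-1 of even degree, if any.  Deleting v
   leaves a graph that is not even-degenerate either (put v first in the
   ordering), and G is recovered from G - v, the vertex v, and the edges from
   v to the later vertices: the edges to earlier vertices u are forced by the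
   parity of deg u, and the edge to one further vertex by the parity of deg v.
   Hence G is encoded by G - v and a nonempty subset of an n-set, which
   records v as its minimum.  If there is no such v, all of 0, ..., n-1 have
   odd degree and G is determined by G - n.  So the number of bad graphs on
   n+1 vertices is at most b_n (2^n - 1) + g_n, where b_n and g_n count bad
   and all graphs on n vertices, while there are at least 2^n g_n graphs on
   n+1 vertices. *)

Lemma ltn_lift n (v : 'I_n) (a b : 'I_n.-1) : (lift v a < lift v b)%N = (a < b)%N.
Proof. by rewrite !ltnNge /= leq_bump2. Qed.

Lemma card_set_lift n (v : 'I_n) (P : pred 'I_n) :
  #|[set w | P w]| = (P v + #|[set b : 'I_n.-1 | P (lift v b)]|)%N.
Proof.
rewrite !cardsE -!sum1_card (big_mkcond (fun w => w \in _)) /= (bigD1_ord v) //=.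
by rewrite !big_mkcond /= [in RHS]big_mkcond /= !unfold_in; case: (P v).
Qed.

Lemma odd_card_eq_at m (a : 'I_m) (Q1 Q2 : pred 'I_m) :
  (forall b, b != a -> Q1 b = Q2 b) ->
  odd #|[set b | Q1 b]| = odd #|[set b | Q2 b]| -> Q1 a = Q2 a.
Proof.
move=> Q12; rewrite !(card_set_lift a).
have -> : [set b | Q1 (lift a b)] = [set b | Q2 (lift a b)].
  by apply/setP => b; rewrite !inE Q12 // lift_eqF.
by rewrite !oddD !oddb => /addIb.
Qed.

Section Graphs.
Variable n : nat.
Implicit Types E : {set 'I_n * 'I_n}.

Lemma adjC E x y : adj E x y = adj E y x.
Proof. by rewrite /adj orbC. Qed.

Lemma adjxx E x : is_graph E -> adj E x x = false.
Proof. by move=> /subsetP gE; rewrite /adj orbb; apply/negP => /gE; rewrite inE ltnn. Qed.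

Lemma mem_graph E p : is_graph E -> (p \in E) = (p.1 < p.2)%N && adj E p.1 p.2.
Proof.
move=> /subsetP gE; case: p => x y; rewrite /adj /=.
case xyE: ((x, y) \in E); first by have := gE _ xyE; rewrite inE /= => ->.
case yxE: ((y, x) \in E); last by rewrite andbF.
by have := gE _ yxE; rewrite inE /= andbT; case: ltngtP.
Qed.

Lemma eq_graph E1 E2 : is_graph E1 -> is_graph E2 -> adj E1 =2 adj E2 -> E1 = E2.
Proof. by move=> g1 g2 E12; apply/setP => p; rewrite !mem_graph // E12. Qed.

Definition deg E u := #|[set w | adj E u w]|.

Definition graphs := [set E : {set 'I_n * 'I_n} | is_graph E].

Definition bad_graphs := [set E : {set 'I_n * 'I_n} | is_graph E && ~~ even_degenerate E].

Lemma graphs_gt0 : (0 < #|graphs|)%N.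
Proof. by apply/card_gt0P; exists set0; rewrite inE /is_graph sub0set. Qed.

End Graphs.

Section DeleteVertex.
Variables (n : nat) (v : 'I_n.+1).
Implicit Types E : {set 'I_n.+1 * 'I_n.+1}.

Definition del_vertex E : {set 'I_n * 'I_n} := [set p | (lift v p.1, lift v p.2) \in E].

Lemma adj_del_vertex E a b : adj (del_vertex E) a b = adj E (lift v a) (lift v b).
Proof. by rewrite /adj !inE. Qed.

Lemma is_graph_del_vertex E : is_graph E -> is_graph (del_vertex E).
Proof. by move=> /subsetP gE; apply/subsetP => p; rewrite inE => /gE; rewrite !inE ltn_lift. Qed.

Lemma eq_graph_del_vertex E1 E2 :
  is_graph E1 -> is_graph E2 -> del_vertex E1 = del_vertex E2 ->
  (forall a, adj E1 v (lift v a) = adj E2 v (lift v a)) -> E1 = E2.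
Proof.
move=> g1 g2 dE12 vE12; apply: eq_graph => // x y.
case: (unliftP v x) => [a ->|->]; case: (unliftP v y) => [b ->|->].
- by rewrite -!adj_del_vertex dE12.
- by rewrite adjC vE12 adjC.
- exact: vE12.
- by rewrite !adjxx.
Qed.

Lemma deg_lift E a : deg E (lift v a) = (adj E (lift v a) v + deg (del_vertex E) a)%N.
Proof.
rewrite /deg (card_set_lift v); congr (_ + _)%N.
by apply: eq_card => b; rewrite !inE adj_del_vertex.
Qed.

Lemma deg_del_vertex E : is_graph E -> deg E v = #|[set b | adj E v (lift v b)]|.
Proof. by move=> gE; rewrite /deg (card_set_lift v) adjxx. Qed.

Lemma eq_adj_odd_deg E1 E2 a :
  del_vertex E1 = del_vertex E2 -> odd (deg E1 (lift v a)) -> odd (deg E2 (lift v a)) ->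
  adj E1 v (lift v a) = adj E2 v (lift v a).
Proof.
move=> dE12; rewrite !deg_lift !oddD !oddb dE12 adjC [adj E2 _ _]adjC.
by case: (adj E1 _ _); case: (adj E2 _ _); case: (odd _).
Qed.

Lemma even_degenerate_del_vertex E :
  is_graph E -> ~~ odd (deg E v) -> even_degenerate (del_vertex E) -> even_degenerate E.
Proof.
move=> gE even_v /existsP[s /forallP s_ok]; apply/existsP.
exists (lift_perm ord0 v s); apply/forallP => i; apply/implyP.
case: (unliftP ord0 i) => [k ->|-> _]; rewrite ?lift_perm_lift ?lift_perm_id.
- have -> : #|[set j : 'I_n.+1 | (lift ord0 k < j)%N
                                  && adj E (lift v (s k)) (lift_perm ord0 v s j)]|
          = #|[set m : 'I_n | (k < m)%N && adj (del_vertex E) (s k) (s m)]|.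
    rewrite (card_set_lift ord0) ltn0 add0n; apply: eq_card => m.
    by rewrite !inE !lift0 ltnS lift_perm_lift adj_del_vertex.
  rewrite lift0 => lt_k.
  by apply: (implyP (s_ok k)); lia.
- have -> : [set j : 'I_n.+1 | (@ord0 n < j)%N && adj E v (lift_perm ord0 v s j)]
          = lift_perm ord0 v s @^-1: [set w | adj E v w].
    apply/setP => j; rewrite !inE; case: (unliftP ord0 j) => [m ->|->] //.
    by rewrite lift_perm_id adjxx.
  by rewrite card_preimset //; apply: perm_inj.
Qed.

End DeleteVertex.

Section AddVertex.
Variable n : nat.

Definition add_vertex (H : {set 'I_n * 'I_n}) (S : {set 'I_n}) : {set 'I_n.+1 * 'I_n.+1} :=
  [set p | match unlift ord_max p.1, unlift ord_max p.2 with
           | Some a, Some b => (a, b) \in H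
           | Some a, None => a \in S
           | _, _ => false end].

Lemma is_graph_add_vertex H S : is_graph H -> is_graph (add_vertex H S).
Proof.
move=> /subsetP gH; apply/subsetP => [[x y]]; rewrite !inE /=.
case: (unliftP ord_max x) => [a ->|->]; case: (unliftP ord_max y) => [b ->|->] //.
- by move/gH; rewrite inE ltn_lift.
- by rewrite lift_max => _; apply: ltn_ord.
Qed.

Lemma add_vertexK H S : del_vertex ord_max (add_vertex H S) = H.
Proof. by apply/setP => p; rewrite !inE /= !liftK; case: p. Qed.

Lemma add_vertex_nbrs H S : [set a | (lift ord_max a, ord_max) \in add_vertex H S] = S.
Proof. by apply/setP => a; rewrite !inE /= liftK unlift_none. Qed.

Lemma card_graphsS : (#|graphs n| * 2 ^ n <= #|graphs n.+1|)%N.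
Proof.
have add_inj : injective (fun HS : {set 'I_n * 'I_n} * {set 'I_n} => add_vertex HS.1 HS.2).
  move=> [H1 S1] [H2 S2] /= HS12; congr (_, _).
    by rewrite -(add_vertexK H1 S1) HS12 add_vertexK.
  by rewrite -(add_vertex_nbrs H1 S1) HS12 add_vertex_nbrs.
have -> : (#|graphs n| * 2 ^ n)%N = #|setX (graphs n) [set: {set 'I_n}]|.
  by rewrite cardsX; congr (_ * _)%N; rewrite -powersetT card_powerset cardsT card_ord.
rewrite -(card_imset _ add_inj); apply/subset_leq_card/subsetP => E.
by case/imsetP => -[H S]; rewrite !inE /= => /andP[gH _] ->; apply: is_graph_add_vertex.
Qed.

End AddVertex.

Section Compress.
Variable n : nat.
Implicit Types E : {set 'I_n.+1 * 'I_n.+1}.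

Definition first_even E (v : 'I_n.+1) : bool :=
  [&& (v < n)%N, ~~ odd (deg E v) & [forall u : 'I_n.+1, (u < v)%N ==> odd (deg E u)]].

(* The element [a] with [a = v :> nat] only marks [v] as the minimum: the edge
   from [v] to [lift v a] is forced by the parity of [deg E v]. *)
Definition later_nbrs E (v : 'I_n.+1) : {set 'I_n} :=
  [set a : 'I_n | (v == a :> nat) || ((v < a)%N && adj E v (lift v a))].

Definition compress E : ({set 'I_n * 'I_n} * {set 'I_n}) + {set 'I_n * 'I_n} :=
  if [pick v | first_even E v] is Some v then inl (del_vertex v E, later_nbrs E v)
  else inr (del_vertex ord_max E).

Lemma odd_deg_no_first_even E :
  (forall v, ~~ first_even E v) -> forall u : 'I_n.+1, (u < n)%N -> odd (deg E u).
Proof.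
move=> no_v; suff odd_lt k (u : 'I_n.+1) : (u < k)%N -> (u < n)%N -> odd (deg E u).
  by move=> u; apply: (odd_lt u.+1).
elim: k u => [//|k IHk] u; rewrite ltnS leq_eqVlt => /orP[/eqP uk|]; last exact: IHk.
move=> lt_un; apply/negPn/negP => even_u; move/negP: (no_v u); apply.
rewrite /first_even lt_un even_u; apply/forallP => w; apply/implyP => lt_wu.
by apply: IHk; lia.
Qed.

Lemma later_nbrs_inj E1 E2 (v1 v2 : 'I_n.+1) : (v1 < n)%N -> (v2 < n)%N ->
  later_nbrs E1 v1 = later_nbrs E2 v2 -> v1 = v2.
Proof.
move=> lt_v1n lt_v2n nbrs12; apply: val_inj.
have : Ordinal lt_v1n \in later_nbrs E2 v2 by rewrite -nbrs12 inE eqxx.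
have : Ordinal lt_v2n \in later_nbrs E1 v1 by rewrite nbrs12 inE eqxx.
by rewrite !inE /= => /orP[/eqP e21|/andP[lt21 _]] /orP[/eqP e12|/andP[lt12 _]]; lia.
Qed.

Lemma eq_graph_first_even E1 E2 v :
  is_graph E1 -> is_graph E2 -> first_even E1 v -> first_even E2 v ->
  del_vertex v E1 = del_vertex v E2 -> later_nbrs E1 v = later_nbrs E2 v -> E1 = E2.
Proof.
move=> g1 g2 /and3P[_ even1 /forallP odd1] /and3P[_ even2 /forallP odd2] dE12 nbrs12.
have off_v (b : 'I_n) : (v : nat) != b -> adj E1 v (lift v b) = adj E2 v (lift v b).
  case: (ltngtP v b) => // [lt_vb | lt_bv] _.
  - have := congr1 (fun X : {set 'I_n} => b \in X) nbrs12.
    by rewrite /= !inE (ltn_eqF lt_vb) lt_vb.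
  - have lt_liftv : (lift v b < v)%N.
      by rewrite -[lift v b : nat]/(bump v b) /bump (leqNgt v) lt_bv.
    by apply: (eq_adj_odd_deg dE12); [apply: (implyP (odd1 _)) | apply: (implyP (odd2 _))].
apply: (eq_graph_del_vertex g1 g2 dE12) => a.
have [va|] := eqVneq (v : nat) a; last exact: off_v.
apply: (odd_card_eq_at (Q1 := fun b => adj E1 v (lift v b))
                       (Q2 := fun b => adj E2 v (lift v b))).
  move=> b ne_ba; apply: off_v; apply: contra ne_ba => /eqP vb.
  by apply/eqP/val_inj; rewrite /= -vb va.
by rewrite -!deg_del_vertex // (negbTE even1) (negbTE even2).
Qed.

Lemma eq_graph_no_first_even E1 E2 :
  is_graph E1 -> is_graph E2 ->
  (forall v, ~~ first_even E1 v) -> (forall v, ~~ first_even E2 v) ->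
  del_vertex ord_max E1 = del_vertex ord_max E2 -> E1 = E2.
Proof.
move=> g1 g2 /odd_deg_no_first_even odd1 /odd_deg_no_first_even odd2 dE12.
apply: (eq_graph_del_vertex g1 g2 dE12) => a.
by apply: (eq_adj_odd_deg dE12); [apply: odd1 | apply: odd2]; rewrite lift_max.
Qed.

Lemma compress_inj : {in bad_graphs n.+1 &, injective compress}.
Proof.
move=> E1 E2; rewrite !inE => /andP[g1 _] /andP[g2 _]; rewrite /compress.
case: pickP => [v1 ev1|no1]; case: pickP => [v2 ev2|no2] // [dE12].
- move=> nbrs12; have v12 : v1 = v2.
    by apply: later_nbrs_inj nbrs12; [case/and3P: ev1 | case/and3P: ev2].
  by subst v2; apply: (eq_graph_first_even g1 g2 ev1 ev2).
- by apply: eq_graph_no_first_even => // v; apply/negbT; [apply: no1 | apply: no2].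
Qed.

Definition compress_range : {set ({set 'I_n * 'I_n} * {set 'I_n}) + {set 'I_n * 'I_n}} :=
  inl @: setX (bad_graphs n) [set~ set0] :|: inr @: graphs n.

Lemma compress_bad E : E \in bad_graphs n.+1 -> compress E \in compress_range.
Proof.
rewrite inE => /andP[gE not_ed]; rewrite /compress; case: pickP => [v|_]; last first.
  by apply/setUP; right; rewrite mem_imset ?inE ?is_graph_del_vertex //; apply: inr_inj.
move=> /and3P[lt_vn even_v _]; apply/setUP; left.
rewrite mem_imset; last exact: inl_inj.
rewrite !inE is_graph_del_vertex //=; apply/andP; split.
  by apply: contra not_ed; apply: even_degenerate_del_vertex.
by apply/set0Pn; exists (Ordinal lt_vn); rewrite inE eqxx.
Qed.

Lemma card_compress_range :
  (#|compress_range| <= #|bad_graphs n| * (2 ^ n).-1 + #|graphs n|)%N.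
Proof.
apply: leq_trans (leq_card_setU _ _).1 _.
rewrite !card_imset; [|exact: inr_inj|exact: inl_inj].
by rewrite cardsX cardsC1 -cardsT -powersetT card_powerset cardsT card_ord.
Qed.

Lemma card_bad_graphsS :
  (#|bad_graphs n.+1| <= #|bad_graphs n| * (2 ^ n).-1 + #|graphs n|)%N.
Proof.
rewrite -(card_in_imset compress_inj); apply: leq_trans card_compress_range.
by apply/subset_leq_card/subsetP => _ /imsetP[E badE ->]; apply: compress_bad.
Qed.

End Compress.

Local Open Scope ring_scope.

Lemma ler_ratio_affine (R : numFieldType) (x t b g k : nat) :
  (0 < g)%N -> (0 < k)%N -> (x <= b * k.-1 + g)%N -> (g * k <= t)%N ->
  x%:R / t%:R <= (1 - k%:R^-1) * (b%:R / g%:R) + k%:R^-1 :> R.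
Proof.
move=> g_gt0 k_gt0 le_x le_gk.
have t_gt0 : (0 < t)%N by apply: leq_trans le_gk; rewrite muln_gt0 g_gt0.
have -> : (1 - k%:R^-1) * (b%:R / g%:R) + k%:R^-1 = (b * k.-1 + g)%:R / (g * k)%:R :> R.
  case: k k_gt0 {le_x le_gk} => // k _.
  by rewrite /= natrD !natrM -addn1 natrD; field; rewrite natr1 !pnatr_eq0 -!lt0n g_gt0.
rewrite ler_pdivrMr ?ltr0n // mulrAC ler_pdivlMr ?ltr0n ?muln_gt0 ?g_gt0 //.
by rewrite -!natrM ler_nat; apply: leq_mul.
Qed.

(* The bound holds for n = 0 as well. *)
Theorem mainTheorem15 (n : nat) (hn : (1 <= n)%N) :
  c n.+1 <= (1 - 2%:R ^- n) * c n + 2%:R ^- n.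
Proof.
rewrite -natrX.
exact: ler_ratio_affine (graphs_gt0 n) (expn_gt0 2 n) (card_bad_graphsS n) (card_graphsS n).
Qed.
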